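(* For all integers $d\geq 1$, $C_d=W_d$.
   Context: Every Boolean function $f:\{0,1\}^n\to\{0,1\}$ has a unique multilinear representation $f=\sum_{S\subseteq[n]}a_S\prod_{i\in S}x_i$ over $\mathbb{R}$ agreeing with $f$ on $\{0,1\}^n$; $\deg(f)$ is the degree of this representation. A variable $x_i$ is relevant if it appears in a monomial with nonzero coefficient; $R(f)$ is the number of relevant variables. $R_d$ is the maximum of $R(f)$ over Boolean functions of degree at most $d$, and $C_d=R_d2^{-d}$. For a relevant variable $x_i$, $\deg_i(f)$ is the maximum of $|S|$ over sets $S\ni i$ with $a_S\neq 0$, and $w_i(f)=2^{-\deg_i(f)}$ (for irrelevant variables, $w_i(f)=0$). The weight of $f$ is $W(f)=\sum_i w_i(f)$, and $W_d$ is the maximum of $W(f)$ over all Boolean functions $f$ of degree at most $d$. *)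

From HB Require Import structures.
From mathcomp Require Import all_boot all_order all_algebra.
From mathcomp Require Import all_classical all_reals ereal.
Set Implicit Arguments. Unset Strict Implicit. Unset Printing Implicit Defensive.
Import Order.TTheory GRing.Theory Num.Theory.
Local Open Scope ring_scope.
Local Open Scope classical_set_scope.

Section BoolFun.
Variable R : realType.
Variable n : nat.

Definition boolfun := {ffun 'I_n -> bool} -> bool.

Definition coefs := {set 'I_n} -> R.

(* a is the multilinear representation of f: sum_S a_S prod_{i in S} x_i
   agrees with f on {0,1}^n (such a is unique). *)
Definition is_multilinear_rep (f : boolfun) (a : coefs) : Prop :=
  forall x : {ffun 'I_n -> bool},
    ((f x : nat)%:R : R) = \sum_(S : {set 'I_n}) a S * \prod_(i in S) ((x i : nat)%:R).

Definition deg_le (a : coefs) (d : nat) : Prop :=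
  forall S, a S != 0 -> (#|S| <= d)%N.

Definition relevant (a : coefs) (i : 'I_n) : bool :=
  [exists S : {set 'I_n}, (i \in S) && (a S != 0)].

Definition num_relevant (a : coefs) : nat := #|[set i | relevant a i]|.

Definition deg_var (a : coefs) (i : 'I_n) : nat :=
  \max_(S : {set 'I_n} | (i \in S) && (a S != 0)) #|S|.

Definition wt_var (a : coefs) (i : 'I_n) : R :=
  if relevant a i then (2%:R ^- deg_var a i) else 0.

Definition weight (a : coefs) : R := \sum_(i < n) wt_var a i.

End BoolFun.

(* R_d: the maximum (taken as supremum in the extended reals) of R(f) over all
   Boolean functions f (on any number n of variables) of degree at most d. *)
Definition R_d (R : realType) (d : nat) : \bar R :=
  ereal_sup [set y | exists n (f : boolfun n) (a : coefs R n),
                is_multilinear_rep f a /\ deg_le a d /\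
                y = ((num_relevant a)%:R : R)%:E].

Definition C_d (R : realType) (d : nat) : \bar R :=
  (R_d R d * ((2%:R : R) ^- d)%:E)%E.

Definition W_d (R : realType) (d : nat) : \bar R :=
  ereal_sup [set y | exists n (f : boolfun n) (a : coefs R n),
                is_multilinear_rep f a /\ deg_le a d /\
                y = (weight a)%:E].

(* Lower bound: a relevant variable x_i has deg_i(f) <= d, so w_i(f) >= 2^-d and
   W(f) >= 2^-d R(f).  Upper bound: write w_i(f) = 2^(d - deg_i(f)) 2^-d and replace
   each x_i by a multiplexer x_{i, y_1 ... y_m}, m = d - deg_i(f), reading m of d
   selector bits y_j shared by all variables, out of 2^m fresh cell variables.
   A monomial S of f becomes a product of |S| multiplexers, each of degree <= 1 in
   the cells and using only the first d - |S| selectors, so the new function F still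
   has degree <= d.  Every cell of a relevant x_i is relevant for F (set the selectors
   to its address and feed a point where f is sensitive to x_i), hence
   R(F) >= sum_i 2^(d - deg_i(f)) = 2^d W(f). *)

From mathcomp Require Import all_boot all_order all_algebra.
From mathcomp Require Import all_classical all_reals ereal.
Set Implicit Arguments. Unset Strict Implicit. Unset Printing Implicit Defensive.
Import Order.TTheory GRing.Theory Num.Theory.
Local Open Scope ring_scope.

Section Multilinear.
Variables (R : comNzRingType) (V : finType).
Implicit Types (S T U : {set V}) (P Q : {set V} -> Prop) (x : {ffun V -> bool}).

Definition monomial S x : R := \prod_(i in S) (x i : nat)%:R.

Lemma monomialE S x : monomial S x = (S \subset [set i | x i])%:R.
Proof.
rewrite /monomial; have [/fintype.subsetP Sx|] := boolP (S \subset _).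
  by apply: big1 => i /Sx; rewrite inE => ->.
case/fintype.subsetPn => i iS; rewrite inE => /negbTE xi.
by rewrite (bigD1 i) //= xi mul0r.
Qed.

Lemma monomialU S T x : monomial (S :|: T) x = monomial S x * monomial T x.
Proof. by rewrite !monomialE finset.subUset; case: (S \subset _); rewrite ?mul1r ?mul0r. Qed.

Definition multilinear_in P (g : {ffun V -> bool} -> R) :=
  exists A : {set V} -> R, (forall S, A S != 0 -> P S) /\
    forall x, g x = \sum_S A S * monomial S x.

Lemma multilinear_in_monomial S0 : multilinear_in (eq^~ S0) (monomial S0).
Proof.
exists (fun S => (S == S0)%:R); split=> [S|x].
  by case: (eqVneq S S0) => [->|_]; rewrite ?eqxx.
rewrite (bigD1 S0) //= big1 => [|S /negbTE->]; last by rewrite mul0r.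
by rewrite eqxx mul1r addr0.
Qed.

Lemma sub_multilinear_in P Q g :
  (forall S, P S -> Q S) -> multilinear_in P g -> multilinear_in Q g.
Proof. by move=> PQ [A [PA gE]]; exists A; split => // S /PA /PQ. Qed.

Lemma eq_multilinear_in P g h :
  g =1 h -> multilinear_in P g -> multilinear_in P h.
Proof. by move=> gh [A [PA gE]]; exists A; split => // x; rewrite -gh. Qed.

Lemma multilinear_in0 P : multilinear_in P (fun=> 0).
Proof.
exists (fun=> 0); split=> [S|x]; first by rewrite eqxx.
by rewrite big1 // => S _; rewrite mul0r.
Qed.

Lemma multilinear_inD P g h :
  multilinear_in P g -> multilinear_in P h -> multilinear_in P (fun x => g x + h x).
Proof.
move=> [A [PA gE]] [B [PB hE]]; exists (fun S => A S + B S); split=> [S|x].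
  by have [->|/PA //] := eqVneq (A S) 0; rewrite add0r => /PB.
by rewrite gE hE -big_split; apply: eq_bigr => S _; rewrite mulrDl.
Qed.

Lemma multilinear_inZ P c g :
  multilinear_in P g -> multilinear_in P (fun x => c * g x).
Proof.
move=> [A [PA gE]]; exists (fun S => c * A S); split=> [S|x].
  by have [->|/PA //] := eqVneq (A S) 0; rewrite mulr0 eqxx.
by rewrite gE mulr_sumr; apply: eq_bigr => S _; rewrite mulrA.
Qed.

Lemma multilinear_in_sum P (I : Type) (r : seq I) (J : pred I) F :
  (forall i, J i -> multilinear_in P (F i)) ->
  multilinear_in P (fun x => \sum_(i <- r | J i) F i x).
Proof.
move=> PF; elim: r => [|i r IHr].
  by apply: eq_multilinear_in (multilinear_in0 P) => x; rewrite big_nil.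
have [Ji|nJi] := boolP (J i).
  by apply: eq_multilinear_in (multilinear_inD (PF i Ji) IHr) => x; rewrite big_cons Ji.
by apply: eq_multilinear_in IHr => x; rewrite big_cons (negbTE nJi).
Qed.

Lemma multilinear_inM P1 P2 P g h :
  (forall S T, P1 S -> P2 T -> P (S :|: T)) ->
  multilinear_in P1 g -> multilinear_in P2 h -> multilinear_in P (fun x => g x * h x).
Proof.
move=> P12 [A [PA gE]] [B [PB hE]].
pose C U := \sum_(p : {set V} * {set V} | p.1 :|: p.2 == U) A p.1 * B p.2.
exists C; split=> [U /eqP CU|x].
  apply: contrapT => nPU; apply: CU; apply: big1 => -[S T] /eqP /= UE.
  have [->|/PA PS] := eqVneq (A S) 0; first by rewrite mul0r.
  have [->|/PB PT] := eqVneq (B T) 0; first by rewrite mulr0.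
  by case: nPU; rewrite -UE; exact: P12.
rewrite gE hE mulr_suml; under eq_bigr do rewrite mulr_sumr.
rewrite pair_big (partition_big (fun p => p.1 :|: p.2) predT) //=.
apply: eq_bigr => U _; rewrite /C mulr_suml; apply: eq_bigr => -[S T] /= /eqP <-.
by rewrite monomialU mulrACA.
Qed.

Lemma multilinear_in_prod (Q : nat -> {set V} -> Prop) m (I : eqType) (r : seq I) F :
  Q 0%N finset.set0 -> (forall m1 m2 S T, Q m1 S -> Q m2 T -> Q (m1 + m2)%N (S :|: T)) ->
  (forall i, i \in r -> multilinear_in (Q m) (F i)) ->
  multilinear_in (Q (size r * m)%N) (fun x => \prod_(i <- r) F i x).
Proof.
move=> Q0 QU; elim: r => [|i r IHr] QF.
  have one := multilinear_in_monomial finset.set0.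
  apply: eq_multilinear_in (sub_multilinear_in _ one) => [x|S ->//].
  by rewrite big_nil /monomial big_set0.
have QFr j : j \in r -> multilinear_in (Q m) (F j).
  by move=> jr; apply: QF; rewrite inE jr orbT.
apply: eq_multilinear_in (multilinear_inM _ (QF i (mem_head i r)) (IHr QFr)) => [x|S T].
  by rewrite big_cons.
by move=> QS QT; rewrite mulSn; exact: QU.
Qed.

Lemma multilinear_in_literal b v :
  multilinear_in (fun S => S \subset [set v]) (fun x => (b == x v : nat)%:R).
Proof.
have var : multilinear_in (fun S => S \subset [set v]) (fun x => (x v : nat)%:R).
  have mv := multilinear_in_monomial [set v].
  by apply: eq_multilinear_in (sub_multilinear_in _ mv) => [x|S ->//]; rewrite /monomial big_set1.
case: b; first by apply: eq_multilinear_in var => x; case: (x v).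
have one : multilinear_in (fun S => S \subset [set v]) (fun=> 1).
  have m0 := multilinear_in_monomial finset.set0.
  apply: eq_multilinear_in (sub_multilinear_in _ m0) => [x|S ->]; last exact: finset.sub0set.
  by rewrite /monomial big_set0.
apply: eq_multilinear_in (multilinear_inD one (multilinear_inZ (-1) var)) => x.
by case: (x v); rewrite ?mulr1 ?mulr0 ?addr0 ?subrr.
Qed.

Lemma eq_ffun_prod (I : finType) (T : eqType) (c e : {ffun I -> T}) :
  ((c == e) : nat)%:R = \prod_j ((c j == e j) : nat)%:R :> R.
Proof.
have [->|ne] := eqVneq c e; first by rewrite big1 // => j _; rewrite eqxx.
have /existsP[j cej] : [exists j, c j != e j].
  rewrite -negb_forall; apply: contra ne => /forallP ce; apply/eqP/ffunP => j; exact/eqP.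
by rewrite (bigD1 j) //= (negbTE cej) mul0r.
Qed.

Definition toggle x v : {ffun V -> bool} := [ffun u => x u (+) (u == v)].

Lemma monomial_toggle S x v : v \notin S -> monomial S (toggle x v) = monomial S x.
Proof.
move=> vS; apply: eq_bigr => i iS; rewrite ffunE.
by case: eqVneq iS vS => [-> ->|] //; rewrite addbF.
Qed.

Lemma multilinear_toggle (A : {set V} -> R) v x : (forall S, v \in S -> A S = 0) ->
  \sum_S A S * monomial S (toggle x v) = \sum_S A S * monomial S x.
Proof.
move=> A0; apply: eq_bigr => S _.
by have [/A0->|/monomial_toggle->] := boolP (v \in S); rewrite ?mul0r.
Qed.

Lemma monomial_indicator S T : monomial S [ffun i => i \in T] = (S \subset T)%:R.
Proof.
rewrite monomialE; have -> // : [set i | [ffun i => i \in T] i] = T.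
by apply/setP => i; rewrite inE ffunE.
Qed.

Lemma multilinear_sensitive (A : {set V} -> R) k S0 : k \in S0 -> A S0 != 0 ->
  exists z, \sum_S A S * monomial S (toggle z k) != \sum_S A S * monomial S z.
Proof.
move=> kS0 AS0; pose P S := (k \in S) && (A S != 0).
have [S /andP[kS AS] Smin] := @arg_minnP _ S0 P (fun S => #|S|) (introT andP (conj kS0 AS0)).
(* Evaluating at the indicator of a minimal such S isolates the coefficient A S. *)
pose z : {ffun V -> bool} := [ffun i => i \in S].
have zk : toggle z k = [ffun i => i \in S :\ k].
  apply/ffunP => i; rewrite !ffunE in_setD1.
  by case: eqVneq => [->|]; rewrite ?kS ?addbF.
exists z; rewrite eq_sym -subr_eq0 -sumrB zk.
suff -> : \sum_(T : {set V}) (A T * monomial T z - A T * monomial T [ffun i => i \in S :\ k])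
    = A S by [].
transitivity (\sum_(T : {set V} | (T \subset S) && (k \in T)) A T).
  rewrite [RHS]big_mkcond; apply: eq_bigr => T _.
  rewrite -mulrBr !monomial_indicator subsetD1.
  by case: (T \subset S); case: (k \in T); rewrite /= ?subr0 ?subrr ?mulr1 ?mulr0.
rewrite (bigD1 S) ?subxx ?kS //= big1 ?addr0 // => T /andP[/andP[TS kT] nTS].
apply/eqP/negPn/negP => AT; have := Smin T; rewrite /P kT AT => /(_ isT); apply/negP.
by rewrite -ltnNge; apply: proper_card; rewrite finset.properEneq nTS.
Qed.

End Multilinear.

Lemma natr_bool_inj (R : numDomainType) : injective (fun b : bool => (b : nat)%:R : R).
Proof. by move=> [] [] // /eqP; rewrite eqr_nat. Qed.

Section DegreeWeights.
Variables (R : realType) (n : nat) (a : coefs R n).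

Lemma deg_var_ge (S : {set 'I_n}) i : i \in S -> a S != 0 -> (#|S| <= deg_var a i)%N.
Proof. by move=> iS aS; apply: (leq_bigmax_cond S); rewrite iS aS. Qed.

Lemma deg_var_le d i : deg_le a d -> (deg_var a i <= d)%N.
Proof. by move=> ad; apply/bigmax_leqP => S /andP[_ /ad]. Qed.

Lemma weightE d : deg_le a d ->
  weight a = 2%:R ^- d * (\sum_(i | relevant a i) 2 ^ (d - deg_var a i))%:R.
Proof.
move=> ad; rewrite /weight /wt_var -big_mkcond /= natr_sum mulr_sumr.
apply: eq_bigr => i _; rewrite natrX -[in 2%:R ^- d](subnK (deg_var_le i ad)) exprD invfM.
by rewrite mulrAC mulVf ?mul1r // expf_neq0 // pnatr_eq0.
Qed.

Lemma num_relevantE : num_relevant a = #|[set i | relevant a i]|.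
Proof. by apply: eq_card => i; rewrite inE unfold_in; apply/idP/idP => /asboolP. Qed.

Lemma relevant_le_weight d : deg_le a d ->
  2%:R ^- d * (num_relevant a)%:R <= weight a.
Proof.
move=> ad; rewrite (weightE ad) num_relevantE -sum1dep_card; apply: ler_wpM2l.
  by rewrite invr_ge0 exprn_ge0 ?ler0n.
by rewrite ler_nat; apply: leq_sum => i _; rewrite expn_gt0.
Qed.

End DegreeWeights.

Section Addressing.
Variables (R : realType) (n d : nat) (a : coefs R n).

Definition addr_len k := (d - deg_var a k)%N.

Lemma addr_len_le k : (addr_len k <= d)%N.
Proof. exact: leq_subr. Qed.

Definition cell := {k : 'I_n & {ffun 'I_(addr_len k) -> bool}}.
Definition nvars := #|{: 'I_d + cell}|.
Implicit Types (S U : {set 'I_nvars}) (w : {ffun 'I_nvars -> bool}).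

Definition var (v : 'I_d + cell) : 'I_nvars := enum_rank v.
Definition sel j := var (inl j).
Definition cellvar k (c : {ffun 'I_(addr_len k) -> bool}) :=
  var (inr (Tagged (fun k => {ffun 'I_(addr_len k) -> bool}) c)).

Definition address w k : {ffun 'I_(addr_len k) -> bool} :=
  [ffun j => w (sel (widen_ord (addr_len_le k) j))].
Definition substitute w : {ffun 'I_n -> bool} := [ffun k => w (cellvar (address w k))].
Definition addressed (f : boolfun n) : boolfun nvars := f \o substitute.

Definition cells : {set 'I_nvars} := [set var (inr t) | t : cell].
Definition sels L : {set 'I_nvars} := [set sel j | j : 'I_d & (j < L)%N].
(* The support of a product over a monomial S of f: |S| cells, and only the
   first d - |S| selectors, because each variable of S has addr_len <= d - |S|. *)
Definition bounded L m U :=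
  (#|U :&: cells| <= m)%N /\ U :\: cells \subset sels L.

Lemma bounded0 L : bounded L 0 finset.set0.
Proof. by split; rewrite ?finset.set0I ?cards0 ?finset.set0D ?finset.sub0set. Qed.

Lemma boundedU L m1 m2 S T :
  bounded L m1 S -> bounded L m2 T -> bounded L (m1 + m2) (S :|: T).
Proof.
move=> [S1 S2] [T1 T2]; split; last by rewrite finset.setDUl finset.subUset S2 T2.
by rewrite finset.setIUl (leq_trans (leq_card_setU _ _).1) ?leq_add.
Qed.

Lemma card_sels L : (#|sels L| <= L)%N.
Proof.
apply: leq_trans (leq_imset_card _ _) _.
have [Ld|/ltnW dL] := leqP L d; last by rewrite (leq_trans (max_card _)) ?card_ord.
have sub : [set j : 'I_d | (j < L)%N] \subset [set widen_ord Ld j | j : 'I_L].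
  apply/fintype.subsetP => j; rewrite inE => jL.
  by apply/imsetP; exists (Ordinal jL) => //; apply: val_inj.
by rewrite (leq_trans (subset_leq_card sub)) // (leq_trans (leq_imset_card _ _)) ?card_ord.
Qed.

Lemma bounded_card L m U : bounded L m U -> (#|U| <= m + L)%N.
Proof.
move=> [Uc Us]; rewrite -(cardsID cells U).
exact: leq_add Uc (leq_trans (subset_leq_card Us) (card_sels L)).
Qed.

Lemma bounded_sel L (j : 'I_d) S : (j < L)%N -> S \subset [set sel j] -> bounded L 0 S.
Proof.
move=> jL Sj; split.
  rewrite leqn0 cards_eq0 -finset.subset0; apply/fintype.subsetP => u.
  rewrite !inE => /andP[/(fintype.subsetP Sj)]; rewrite inE => /eqP -> /imsetP[t _].
  by move/enum_rank_inj.
apply/fintype.subsetP => u /setDP[/(fintype.subsetP Sj)]; rewrite inE => /eqP -> _.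
by apply/imsetP; exists j; rewrite ?inE.
Qed.

Lemma bounded_cell L k (c : {ffun 'I_(addr_len k) -> bool}) S :
  S \subset [set cellvar c] -> bounded L 1 S.
Proof.
move=> Sc; split.
  rewrite -(cards1 (cellvar c)) subset_leq_card //.
  exact: fintype.subset_trans (finset.subsetIl _ _) Sc.
apply/fintype.subsetP => u /setDP[/(fintype.subsetP Sc)]; rewrite inE => /eqP -> /negP[].
exact: imset_f.
Qed.

Lemma substituteE w k : ((substitute w k : nat)%:R : R) =
  \sum_c ((c == address w k) : nat)%:R * (w (cellvar c) : nat)%:R.
Proof.
rewrite (bigD1 (address w k)) //= eqxx mul1r big1 ?addr0 ?ffunE // => c /negbTE ->.
by rewrite mul0r.
Qed.

Lemma multilinear_in_substitute L k : (addr_len k <= L)%N ->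
  multilinear_in (bounded L 1) (fun w => (substitute w k : nat)%:R : R).
Proof.
move=> kL; apply: eq_multilinear_in (fun w => esym (substituteE w k)) _.
apply: multilinear_in_sum => c _.
apply: (multilinear_inM (P1 := bounded L 0)) => [S T S0 T1||].
- exact: (boundedU S0 T1).
- apply: (@eq_multilinear_in _ _ _ (fun w => \prod_j ((c j == address w k j) : nat)%:R)).
    by move=> w; rewrite eq_ffun_prod.
  have := multilinear_in_prod (R := R) (Q := bounded L) (m := 0)
    (r := index_enum 'I_(addr_len k)) (bounded0 L) (@boundedU L).
  rewrite muln0; apply=> j _.
  apply: eq_multilinear_in (sub_multilinear_in _ (multilinear_in_literal R (c j) _)) => [w|S].
    by rewrite ffunE.
  exact: (@bounded_sel L (widen_ord _ j) S (leq_trans (ltn_ord j) kL)).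
- have xc := multilinear_in_literal R true (cellvar c).
  apply: (eq_multilinear_in _ (sub_multilinear_in _ xc)); last exact: bounded_cell.
  by move=> w; case: (w (cellvar c)).
Qed.

Variable f : boolfun n.
Hypotheses (fa : is_multilinear_rep f a) (ad : deg_le a d).

Lemma addressed_deg_le :
  exists A : coefs R nvars, is_multilinear_rep (addressed f) A /\ deg_le A d.
Proof.
suff [A [Ad AE]] :
    multilinear_in (fun U => (#|U| <= d)%N) (fun w => (addressed f w : nat)%:R : R).
  by exists A.
apply: eq_multilinear_in (fun w => esym (fa (substitute w))) _.
apply: multilinear_in_sum => S _.
have [->|aS] := eqVneq (a S) 0.
  by apply: eq_multilinear_in (multilinear_in0 _ _) => w; rewrite mul0r.
apply: multilinear_inZ.
have := multilinear_in_prod (R := R) (Q := bounded (d - #|S|)) (m := 1) (r := enum S)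
  (F := fun i w => (substitute w i : nat)%:R) (bounded0 _) (@boundedU _).
rewrite muln1 -cardE => /(_ _)/sub_multilinear_in prodS.
apply: (eq_multilinear_in _ (prodS _ _ _)) => [w|U /bounded_card|i].
- by rewrite big_enum.
- by rewrite subnKC ?ad.
- rewrite mem_enum => iS; apply: multilinear_in_substitute.
  by rewrite leq_sub2l ?deg_var_ge.
Qed.

Lemma relevant_sensitive k : relevant a k -> exists z, f (toggle z k) != f z.
Proof.
case/existsP=> S /andP[kS aS]; have [z nz] := multilinear_sensitive kS aS.
by exists z; move: nz; rewrite /monomial -!fa; apply: contra_neq => ->.
Qed.

Lemma addressed_relevant (A : coefs R nvars) k (c : {ffun 'I_(addr_len k) -> bool}) :
  is_multilinear_rep (addressed f) A -> relevant a k -> relevant A (cellvar c).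
Proof.
move=> FA rk; apply: contraT => nrel.
have A0 S : cellvar c \in S -> A S = 0.
  by move=> cS; apply/eqP; apply: contraNT nrel => AS; apply/existsP; exists S; rewrite cS.
have [z zk] := relevant_sensitive rk.
pose w : {ffun 'I_nvars -> bool} := [ffun u => match enum_val u with
  | inl j => odflt false (omap c (insub (val j)))
  | inr t => z (tag t) end].
have addr_w : address w k = c.
  by apply/ffunP => j; rewrite !ffunE enum_rankK /= valK.
have subst_w : substitute w = z by apply/ffunP => k'; rewrite !ffunE enum_rankK.
have addr_toggle k' : address (toggle w (cellvar c)) k' = address w k'.
  by apply/ffunP => j; rewrite !ffunE (inj_eq enum_rank_inj) addbF.
have subst_toggle : substitute (toggle w (cellvar c)) = toggle z k.
  apply/ffunP => k'; rewrite [substitute _ _]ffunE [toggle w _ _]ffunE [toggle z k k']ffunE.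
  rewrite addr_toggle -subst_w [substitute w k']ffunE (inj_eq enum_rank_inj).
  congr (_ (+) _).
  have [->|nk] := eqVneq k' k; first by rewrite addr_w eqxx.
  by apply/negbTE; apply: contra nk => /eqP [->].
case/negP: zk; rewrite -subst_toggle -subst_w.
apply/eqP; apply: (@natr_bool_inj R); move: (FA (toggle w (cellvar c))) (FA w) => /= -> ->.
exact: multilinear_toggle.
Qed.

Lemma count_addressed_relevant (A : coefs R nvars) : is_multilinear_rep (addressed f) A ->
  (\sum_(k | relevant a k) 2 ^ addr_len k <= num_relevant A)%N.
Proof.
move=> FA; rewrite num_relevantE.
have -> : (\sum_(k | relevant a k) 2 ^ addr_len k = #|[set t : cell | relevant a (tag t)]|)%N.
  rewrite -sum1dep_card (eq_bigl (fun t : cell => relevant a (tag t) && true)); last first.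
    by move=> t; rewrite andbT.
  rewrite -(@sig_big_dep _ _ _ _ (fun k => {ffun 'I_(addr_len k) -> bool}) _
    (fun _ _ => true) (fun _ _ => 1%N)).
  by apply: eq_bigr => k _; rewrite sum1_card card_ffun card_bool card_ord.
have var_inj : injective (fun t => var (inr t)) by move=> t1 t2 /enum_rank_inj [].
rewrite -(card_imset _ var_inj); apply: subset_leq_card.
apply/fintype.subsetP => u /imsetP[[k c]]; rewrite !inE => /= rk ->.
exact: addressed_relevant FA rk.
Qed.

Lemma weight_le_addressed : exists A : coefs R nvars,
  [/\ is_multilinear_rep (addressed f) A, deg_le A d &
      weight a <= 2%:R ^- d * (num_relevant A)%:R].
Proof.
have [A [FA Ad]] := addressed_deg_le; exists A; split=> //.
rewrite (weightE ad) ler_wpM2l ?invr_ge0 ?exprn_ge0 ?ler0n // ler_nat.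
exact: count_addressed_relevant.
Qed.

End Addressing.

Theorem proposition1 (R : realType) (d : nat) : (1 <= d)%N -> C_d R d = W_d R d.
Proof.
(* The equality holds for d = 0 as well. *)
move=> _; rewrite /C_d /W_d /R_d muleC -ereal_sup_pZl; last first.
  by rewrite invr_gt0 exprn_gt0 // ltr0n.
apply/eqP; rewrite eq_le; apply/andP; split.
  apply: ge_ereal_sup => y [x [n [f [a [fa [ad ->]]]]] <-].
  apply: le_ereal_sup_tmp; exists (weight a)%:E; first by exists n, f, a.
  by rewrite -EFinM lee_fin; exact: relevant_le_weight.
apply: ge_ereal_sup => y [n [f [a [fa [ad ->]]]]].
have [A [FA Ad wA]] := weight_le_addressed fa ad.
apply: le_ereal_sup_tmp; exists ((((2%:R : R) ^- d)%:E * ((num_relevant A)%:R)%:E)%E).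
  by exists ((num_relevant A)%:R)%:E => //; exists _, (addressed f), A.
by rewrite -EFinM lee_fin.
Qed.
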